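(* Let $n\ge 1$, let $\rho$ be an $n\times n$ correlation matrix, let $u=(u_1,\ldots,u_n)\in\mathbb{R}^n$ be arbitrary and let $\kappa\in\{0,1\}$. Define the $n\times n$ matrix $\hat\rho$ by \[ \hat{\rho}_{ij} = \begin{cases} \dfrac{\rho_{ij}+\kappa u_iu_j}{\sqrt{(1+u_i^2)(1+u_j^2)}}, & i\neq j,\\[2mm] 1, & i=j. \end{cases} \] Then $\hat\rho$ is a correlation matrix.
   Context: An $n\times n$ real matrix $C$ is called a correlation matrix if (i) $C$ is positive semi-definite, i.e. $v^T C v\ge 0$ for all $v\in\mathbb{R}^n$, and (ii) all diagonal entries equal one, $C_{ii}=1$ for $i=1,\ldots,n$. *)

From mathcomp Require Import all_boot all_order all_algebra.
Set Implicit Arguments. Unset Strict Implicit. Unset Printing Implicit Defensive.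
Import Order.TTheory GRing.Theory Num.Theory.
Local Open Scope ring_scope.

Definition psd (R : realFieldType) (n : nat) (C : 'M[R]_n) : Prop :=
  forall v : 'cV[R]_n, 0 <= (v^T *m C *m v) 0 0.

Definition correlation_matrix (R : realFieldType) (n : nat) (C : 'M[R]_n) : Prop :=
  psd C /\ forall i : 'I_n, C i i = 1.

Definition rho_hat (R : rcfType) (n : nat) (rho : 'M[R]_n) (u : 'cV[R]_n)
  (kappa : R) : 'M[R]_n :=
  \matrix_(i, j) (if i == j then 1
                  else (rho i j + kappa * u i 0 * u j 0) /
                       Num.sqrt ((1 + u i 0 ^+ 2) * (1 + u j 0 ^+ 2))).

From mathcomp Require Import all_boot all_order all_algebra.
From mathcomp Require Import ring.

Set Implicit Arguments.
Unset Strict Implicit.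
Unset Printing Implicit Defensive.
Import Order.TTheory GRing.Theory Num.Theory.
Local Open Scope ring_scope.

(* With [d i = (1 + u_i^2)^(-1/2)], the matrix [rho_hat] is the congruence
   [D (rho + kappa u u^T + (1 - kappa) diag(u_i^2)) D] by [D = diag(d)]: off the
   diagonal this is the defining formula, and on the diagonal the middle matrix
   has entry [1 + u_i^2], so the product is [1].  For [0 <= kappa <= 1] the
   middle matrix is a nonnegative combination of positive semidefinite
   matrices, and congruence preserves positive semidefiniteness. *)

Section PSD.
Variables (R : realFieldType) (n : nat).
Implicit Types (A B : 'M[R]_n) (v : 'cV[R]_n).

Lemma psdD A B : psd A -> psd B -> psd (A + B).
Proof.
by move=> psdA psdB v; rewrite mulmxDr mulmxDl mxE addr_ge0.
Qed.

Lemma psdZ (a : R) A : 0 <= a -> psd A -> psd (a *: A).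
Proof.
by move=> a_ge0 psdA v; rewrite -scalemxAr -scalemxAl mxE mulr_ge0.
Qed.

Lemma psd_congr (M A : 'M[R]_n) : psd A -> psd (M^T *m A *m M).
Proof.
by move=> psdA v; have := psdA (M *m v); rewrite trmx_mul !mulmxA.
Qed.

Lemma psd_outer (w : 'cV[R]_n) : psd (w *m w^T).
Proof.
move=> v; rewrite !mulmxA -mulmxA -[w^T *m v]trmxK trmx_mul trmxK.
by rewrite mxE big_ord1 [(v^T *m w)^T _ _]mxE -expr2 sqr_ge0.
Qed.

Lemma psd_diag (d : 'rV[R]_n) : (forall i, 0 <= d 0 i) -> psd (diag_mx d).
Proof.
move=> d_ge0 v; rewrite mul_mx_diag !mxE.
apply: sumr_ge0 => i _; rewrite !mxE mulrAC -expr2.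
exact: mulr_ge0 (sqr_ge0 _) (d_ge0 i).
Qed.

End PSD.

Section RhoHat.
Variables (R : rcfType) (n : nat).
Implicit Types (rho : 'M[R]_n) (u : 'cV[R]_n) (kappa : R).

Definition rho_hat_scaling u : 'M[R]_n :=
  diag_mx (\row_i (Num.sqrt (1 + u i 0 ^+ 2))^-1).

Definition rho_hat_core rho u kappa : 'M[R]_n :=
  rho + kappa *: (u *m u^T) + diag_mx (\row_i ((1 - kappa) * u i 0 ^+ 2)).

Lemma rho_hat_congruence rho u kappa : (forall i, rho i i = 1) ->
  rho_hat rho u kappa =
  (rho_hat_scaling u)^T *m rho_hat_core rho u kappa *m rho_hat_scaling u.
Proof.
move=> rho_diag; rewrite tr_diag_mx mul_diag_mx mul_mx_diag.
apply/matrixP => i j; rewrite !mxE big_ord1 mxE.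
have u2_ge0 k : 0 <= 1 + u k 0 ^+ 2 by rewrite addr_ge0 ?sqr_ge0.
have sqrt_neq0 k : Num.sqrt (1 + u k 0 ^+ 2) != 0.
  by rewrite gt_eqF // sqrtr_gt0 ltr_pwDl ?sqr_ge0.
case: eqP => [<- | _]; last first.
  by rewrite mulr0n addr0 sqrtrM // invfM mulrC mulrA mulrAC.
rewrite rho_diag mulr1n.
set s := Num.sqrt (1 + u i 0 ^+ 2).
have s_neq0 : s != 0 := sqrt_neq0 i.
have s_sq : s ^+ 2 = 1 + u i 0 ^+ 2 := sqr_sqrtr (u2_ge0 i).
rewrite (_ : _ + _ = s ^+ 2); last by rewrite s_sq; ring.
by field.
Qed.

Lemma psd_rho_hat_core rho u kappa : psd rho -> 0 <= kappa <= 1 ->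
  psd (rho_hat_core rho u kappa).
Proof.
move=> psd_rho /andP[kappa_ge0 kappa_le1].
apply: psdD; first exact: psdD (psd_rho) (psdZ kappa_ge0 (psd_outer u)).
by apply: psd_diag => i; rewrite mxE mulr_ge0 ?subr_ge0 ?sqr_ge0.
Qed.

Lemma rho_hat_correlation rho u kappa : correlation_matrix rho ->
  0 <= kappa <= 1 -> correlation_matrix (rho_hat rho u kappa).
Proof.
move=> [psd_rho rho_diag] kappa01; split; last by move=> i; rewrite mxE eqxx.
rewrite rho_hat_congruence //.
exact/psd_congr/psd_rho_hat_core.
Qed.

End RhoHat.

Theorem lemma1 (R : rcfType) (n : nat) (hn : (1 <= n)%N) (rho : 'M[R]_n)
  (u : 'cV[R]_n) (kappa : R) :
  correlation_matrix rho -> (kappa = 0 \/ kappa = 1) ->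
  correlation_matrix (rho_hat rho u kappa).
Proof.
move=> corr_rho kappa01; apply: rho_hat_correlation => //.
by case: kappa01 => ->; rewrite lexx ler01.
Qed.
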